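(* Let $a<b$ and let $\phi:[a,b]^n\to\mathbb{R}$ be permutation-invariant, such that its convex envelope over $[a,b]^n$ coincides with the convex envelope over $[a,b]^n$ of its restriction to $\{a,b\}^n$ (the function equal to $\phi$ on $\{a,b\}^n$ and $+\infty$ elsewhere). For $i=1,\dots,n$ and $j=0,\dots,n$, let $p_{ij}=a$ if $i>j$ and $p_{ij}=b$ otherwise, and let $p_{\cdot j}\in\mathbb{R}^n$ be the $j$-th column. Define $f(x)=\phi(p_{\cdot0})+\sum_{i=1}^n\frac{x_i-a}{b-a}\big(\phi(p_{\cdot i})-\phi(p_{\cdot i-1})\big)$. Then for every $x\in[a,b]^n$, $$\mathrm{conv}_{[a,b]^n}(\phi)(x)=\min\{f(u)\mid u\ge_m x,\ b\ge u_1\ge\dots\ge u_n\ge a\}.$$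
   Context: $\mathrm{conv}_C(\phi)$ denotes the convex envelope (largest convex underestimator) of $\phi$ over $C$. $\phi$ is permutation-invariant if $\phi(Qx)=\phi(x)$ for all permutation matrices $Q$. $u\ge_m x$ means $\sum_{i=1}^j u_{[i]}\ge\sum_{i=1}^j x_{[i]}$ for $j<n$ with equality for $j=n$ ($v_{[i]}$ the $i$-th largest entry). *)

From HB Require Import structures.
From mathcomp Require Import all_boot all_order all_algebra all_fingroup.
Set Implicit Arguments. Unset Strict Implicit. Unset Printing Implicit Defensive.
Import Order.TTheory GRing.Theory Num.Theory.
Local Open Scope ring_scope.

Section Defs.
Variables (R : realFieldType) (n : nat).

Definition in_box (a b : R) (x : 'rV[R]_n) : Prop :=
  forall i : 'I_n, a <= x ord0 i <= b.

Definition in_vertices (a b : R) (x : 'rV[R]_n) : Prop :=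
  forall i : 'I_n, x ord0 i = a \/ x ord0 i = b.

Definition convex_on (C : 'rV[R]_n -> Prop) (h : 'rV[R]_n -> R) : Prop :=
  forall x y t, C x -> C y -> 0 <= t <= 1 ->
    h (t *: x + (1 - t) *: y) <= t * h x + (1 - t) * h y.

(* g is the convex envelope over C of the (extended-valued) function equal to
   phi on S and +infinity on C \ S  (S a subset of C):
   g is convex on C, g <= phi on S, and g dominates every convex h on C
   with h <= phi on S. *)
Definition is_conv_env (C S : 'rV[R]_n -> Prop) (phi : 'rV[R]_n -> R)
  (g : 'rV[R]_n -> R) : Prop :=
  [/\ convex_on C g,
      (forall x, S x -> g x <= phi x) &
      (forall h, convex_on C h -> (forall x, S x -> h x <= phi x) ->
         forall x, C x -> h x <= g x)].

Definition perm_invariant_on (C : 'rV[R]_n -> Prop) (phi : 'rV[R]_n -> R) : Prop :=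
  forall (s : 'S_n) x, C x -> phi (col_perm s x) = phi x.

(* entries sorted in nonincreasing order: (dsort x)`_k = x_[k+1] *)
Definition dsort (x : 'rV[R]_n) : seq R :=
  sort (fun u v : R => v <= u) [seq x ord0 i | i <- enum 'I_n].

Definition majorizes (u x : 'rV[R]_n) : Prop :=
  (forall j : nat, (j < n)%N ->
     \sum_(k < j) (dsort x)`_k <= \sum_(k < j) (dsort u)`_k) /\
  \sum_(k < n) (dsort u)`_k = \sum_(k < n) (dsort x)`_k.

(* column p_{.j}, j = 0..n: entry i (1-indexed) is b if i <= j, a otherwise;
   with 0-indexed i : 'I_n this is b iff i < j. *)
Definition pcol (a b : R) (j : nat) : 'rV[R]_n :=
  \row_(i < n) (if (i < j)%N then b else a).

Definition ffun_f (a b : R) (phi : 'rV[R]_n -> R) (x : 'rV[R]_n) : R :=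
  phi (pcol a b 0) +
  \sum_(i < n) ((x ord0 i - a) / (b - a)) *
               (phi (pcol a b i.+1) - phi (pcol a b i)).

Definition sorted_in (a b : R) (u : 'rV[R]_n) : Prop :=
  (forall i : 'I_n, a <= u ord0 i <= b) /\
  (forall i j : 'I_n, (i <= j)%N -> u ord0 j <= u ord0 i).

End Defs.

From HB Require Import structures.
From mathcomp Require Import all_boot all_order all_algebra all_fingroup.
From mathcomp Require Import ring lra zify.
From Stdlib Require List Classical_Prop ClassicalEpsilon.
Import Order.TTheory GRing.Theory Num.Theory.
Set Implicit Arguments. Unset Strict Implicit. Unset Printing Implicit Defensive.
Local Open Scope ring_scope.

(* The envelope [g] is convex and, like [phi], permutation invariant; such a
   function is Schur-convex (proved by Robin Hood transfers between two entries), so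
   [g x = g (sort x) <= g u] for every nonincreasing [u] majorizing [x].  A nonincreasing
   [u] in the box is the convex combination of the staircase vertices [p_{.j}] whose weights
   are the consecutive differences of its rescaled entries, and [f u] is the same
   combination of the [phi p_{.j}]; Jensen's inequality gives [g u <= f u].

   In the rescaled entries of [u] the admissible set is a polytope given by
   finitely many affine inequalities, so [f] attains its minimum [H x] on it (Fourier-Motzkin
   elimination over an ordered field).  [H] is convex because convex combinations of
   admissible vectors are admissible, and [H <= phi] on [{a,b}^n] because a sorted vertex is
   some [p_{.k}], where [f = phi].  As [g] dominates every such function, [H <= g]. *)

Section SortedRows.
Variables (R : realFieldType) (n : nat).
Implicit Types (x y u v : 'rV[R]_n).

Definition entries x : seq R := [seq x ord0 i | i <- enum 'I_n].
Definition dsort_row x : 'rV[R]_n := \row_(i < n) (dsort x)`_i.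
Definition nonincr_row u := forall i j : 'I_n, (i <= j)%N -> u ord0 j <= u ord0 i.
Definition prefix_sum u (j : nat) : R := \sum_(i < n | (i < j)%N) u ord0 i.

Definition prefix_majorizes u x :=
  (forall j, (j < n)%N -> prefix_sum x j <= prefix_sum u j) /\ prefix_sum u n = prefix_sum x n.

Lemma size_entries x : size (entries x) = n.
Proof. by rewrite size_map size_enum_ord. Qed.

Lemma size_dsort x : size (dsort x) = n.
Proof. by rewrite size_sort size_entries. Qed.

Lemma nth_entries x (i : 'I_n) : (entries x)`_i = x ord0 i.
Proof. by rewrite (nth_map i) ?nth_ord_enum // size_enum_ord. Qed.

Let ge_trans : transitive (fun u v : R => v <= u).
Proof. by move=> u v w h1 h2; apply: le_trans h2 h1. Qed.

Lemma nonincr_dsort_row x : nonincr_row (dsort_row x).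
Proof.
move=> i j le_ij; rewrite !mxE.
by apply: (sorted_leq_nth ge_trans _ 0 (sort_sorted _ _)); rewrite ?inE ?size_dsort.
Qed.

Lemma entries_dsort_row x : entries (dsort_row x) = dsort x.
Proof.
apply: (@eq_from_nth _ 0); first by rewrite size_entries size_dsort.
by move=> k; rewrite size_entries => lt_kn; rewrite (nth_entries _ (Ordinal lt_kn)) mxE.
Qed.

Lemma dsort_nonincr u : nonincr_row u -> dsort u = entries u.
Proof.
move=> su; apply: sorted_sort; first exact: ge_trans.
have : sorted leq (map val (enum 'I_n)) by rewrite val_enum_ord iota_sorted.
by rewrite /entries !sorted_map; apply: sub_sorted => i j; apply: su.
Qed.

Lemma exists_perm_dsort_row x : exists s : 'S_n, col_perm s x = dsort_row x.
Proof.
have /tuple_permP[s es] : perm_eq (dsort x) [tuple x ord0 i | i < n] by rewrite perm_sort.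
exists s; apply/rowP => i; rewrite !mxE.
have -> : (dsort x)`_i = nth 0 [tuple tnth [tuple x ord0 i0 | i0 < n] (s i0) | i0 < n] i.
  by rewrite -es.
by rewrite nth_mktuple tnth_mktuple.
Qed.

Lemma prefix_sum_entries u j : (j <= n)%N -> \sum_(k < j) (entries u)`_k = prefix_sum u j.
Proof.
move=> le_jn; rewrite (big_ord_widen n (fun k => (entries u)`_k) le_jn).
by apply: eq_bigr => i _; rewrite nth_entries.
Qed.

Lemma majorizesE u x : nonincr_row u -> majorizes u x <-> prefix_majorizes u (dsort_row x).
Proof.
move=> su; rewrite /majorizes /prefix_majorizes (dsort_nonincr su) -entries_dsort_row.
split=> [[le_pre eq_tot]|[le_pre eq_tot]]; split.
- by move=> j lt_jn; rewrite -!prefix_sum_entries ?(ltnW lt_jn) //; apply: le_pre.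
- by rewrite -!prefix_sum_entries.
- by move=> j lt_jn; rewrite !prefix_sum_entries ?(ltnW lt_jn) //; apply: le_pre.
- by rewrite !prefix_sum_entries.
Qed.

Lemma majorizes_dsort_row x : majorizes (dsort_row x) x.
Proof. by apply/majorizesE; [apply: nonincr_dsort_row | split]. Qed.

Lemma prefix_sumE u j : prefix_sum u j = \sum_(i < n) (i < j)%N%:R * u ord0 i.
Proof.
rewrite /prefix_sum big_mkcond; apply: eq_bigr => i _.
by case: (i < j)%N; rewrite ?mul1r ?mul0r.
Qed.

Lemma prefix_sum_total u : prefix_sum u n = \sum_(i < n) u ord0 i.
Proof. by apply: eq_bigl => i; rewrite ltn_ord. Qed.

Lemma prefix_sum_comb u v t j :
  prefix_sum (t *: u + (1 - t) *: v) j = t * prefix_sum u j + (1 - t) * prefix_sum v j.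
Proof. by rewrite /prefix_sum !mulr_sumr -big_split; apply: eq_bigr => i _; rewrite !mxE. Qed.

Lemma sum_lt_indicator j : (j <= n)%N -> \sum_(i < n) ((i < j)%N%:R : R) = j%:R.
Proof.
move=> le_jn; transitivity (\sum_(i < n | (i < j)%N) (1 : R)).
  by rewrite [RHS]big_mkcond; apply: eq_bigr => i _; case: (i < j)%N.
by rewrite -(big_ord_widen n (fun _ => 1 : R) le_jn) sumr_const card_ord.
Qed.

Lemma rearrangement_le_prefix_sum v (c : 'I_n -> R) j :
  nonincr_row v -> (j <= n)%N -> (forall i, 0 <= c i <= 1) -> \sum_(i < n) c i = j%:R ->
  \sum_(i < n) c i * v ord0 i <= prefix_sum v j.
Proof.
move=> sv le_jn c01 sum_c.
have [q q_lo q_hi] : exists2 q, (forall i : 'I_n, (i < j)%N -> q <= v ord0 i) &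
    (forall i : 'I_n, (j <= i)%N -> v ord0 i <= q).
  case: (posnP n) => [n0|n_gt0]; first by exists 0 => -[i lt_in]; exfalso; move: lt_in; rewrite n0.
  have lt_jn : (j.-1 < n)%N by lia.
  exists (v ord0 (Ordinal lt_jn)) => i lt_ij; apply: sv => /=; lia.
rewrite prefix_sumE -subr_ge0.
have -> : \sum_(i < n) (i < j)%N%:R * v ord0 i - \sum_(i < n) c i * v ord0 i =
    \sum_(i < n) ((i < j)%N%:R - c i) * (v ord0 i - q).
  have -> : \sum_(i < n) ((i < j)%N%:R - c i) * (v ord0 i - q) =
      \sum_(i < n) (i < j)%N%:R * v ord0 i - \sum_(i < n) c i * v ord0 i
      - q * (\sum_(i < n) ((i < j)%N%:R : R) - \sum_(i < n) c i).
    by rewrite mulrBr !big_distrr /= -!sumrB; apply: eq_bigr => i _; ring.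
  by rewrite sum_lt_indicator // sum_c subrr mulr0 subr0.
apply: sumr_ge0 => i _; have /andP[c0 c1] := c01 i.
case: (ltnP i j) => [/q_lo|/q_hi] hq /=; [apply: mulr_ge0 | apply: mulr_le0]; lra.
Qed.

Lemma weighted_sum_le_top_sum x (c : 'I_n -> R) j :
  (j <= n)%N -> (forall i, 0 <= c i <= 1) -> \sum_(i < n) c i = j%:R ->
  \sum_(i < n) c i * x ord0 i <= prefix_sum (dsort_row x) j.
Proof.
move=> le_jn c01 sum_c; have [s es] := exists_perm_dsort_row x.
rewrite (reindex_inj (@perm_inj _ s)) /=.
have -> : \sum_(i < n) c (s i) * x ord0 (s i) = \sum_(i < n) c (s i) * dsort_row x ord0 i.
  by apply: eq_bigr => i _; rewrite -es mxE.
apply: rearrangement_le_prefix_sum => //; first exact: nonincr_dsort_row.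
by rewrite -sum_c [RHS](reindex_inj (@perm_inj _ s)).
Qed.
End SortedRows.

Section TopSums.
Variables (R : realFieldType) (n : nat).
Implicit Types (x y z : 'rV[R]_n).

Lemma prefix_sum_dsort_row_total z : prefix_sum (dsort_row z) n = \sum_(i < n) z ord0 i.
Proof.
have [s <-] := exists_perm_dsort_row z; rewrite prefix_sum_total.
by rewrite [RHS](reindex_inj (@perm_inj _ s)); apply: eq_bigr => i _; rewrite mxE.
Qed.

Lemma top_sum_weights z j : (j <= n)%N ->
  exists c : 'I_n -> R, [/\ forall i, 0 <= c i <= 1, \sum_(i < n) c i = j%:R &
    prefix_sum (dsort_row z) j = \sum_(i < n) c i * z ord0 i].
Proof.
move=> le_jn; have [s <-] := exists_perm_dsort_row z.
exists (fun k => ((s^-1)%g k < j)%N%:R); split.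
- by move=> i; case: (_ < _)%N; rewrite ?ler01 ?lexx.
- rewrite -(@sum_lt_indicator R n j) // (reindex_inj (@perm_inj _ s)).
  by apply: eq_bigr => i _; rewrite permK.
- rewrite prefix_sumE [RHS](reindex_inj (@perm_inj _ s)).
  by apply: eq_bigr => i _; rewrite permK mxE.
Qed.

(* With [top_sum_weights], the sum of the [j] largest entries is a maximum of linear forms. *)
Lemma prefix_sum_dsort_row_convex x y t j : 0 <= t <= 1 -> (j <= n)%N ->
  prefix_sum (dsort_row (t *: x + (1 - t) *: y)) j <=
  t * prefix_sum (dsort_row x) j + (1 - t) * prefix_sum (dsort_row y) j.
Proof.
move=> /andP[t0 t1] le_jn.
have [c [c01 sum_c ->]] := top_sum_weights (t *: x + (1 - t) *: y) le_jn.
have -> : \sum_(i < n) c i * (t *: x + (1 - t) *: y) ord0 i =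
    t * (\sum_(i < n) c i * x ord0 i) + (1 - t) * (\sum_(i < n) c i * y ord0 i).
  by rewrite !mulr_sumr -big_split; apply: eq_bigr => i _; rewrite !mxE /=; ring.
by apply: lerD; apply: ler_wpM2l; rewrite ?subr_ge0 // weighted_sum_le_top_sum.
Qed.
End TopSums.

Section Admissible.
Variables (R : realFieldType) (n : nat) (a b : R).
Implicit Types (x y u v : 'rV[R]_n).

Definition admissible x u := majorizes u x /\ sorted_in a b u.

Lemma in_box_comb x y t : 0 <= t <= 1 -> in_box a b x -> in_box a b y ->
  in_box a b (t *: x + (1 - t) *: y).
Proof.
move=> /andP[t0 t1] bx by_ i; rewrite !mxE.
have /andP[xa xb] := bx i; have /andP[ya yb] := by_ i.
have /andP[s0 s1] : (0 <= 1 - t) && (1 - t <= 1) by apply/andP; lra.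
by apply/andP; split; nra.
Qed.

Lemma nonincr_comb u v t : 0 <= t <= 1 -> nonincr_row u -> nonincr_row v ->
  nonincr_row (t *: u + (1 - t) *: v).
Proof.
move=> /andP[t0 t1] su sv i j le_ij; rewrite !mxE.
have := su i j le_ij; have := sv i j le_ij; nra.
Qed.

Lemma admissible_comb x y ux uy t : 0 <= t <= 1 ->
  admissible x ux -> admissible y uy ->
  admissible (t *: x + (1 - t) *: y) (t *: ux + (1 - t) *: uy).
Proof.
move=> t01 [mx [bx sx]] [my [by_ sy]].
have sw := nonincr_comb t01 sx sy; split; last by split; [apply: in_box_comb | ].
have [le_x eq_x] := (majorizesE x sx).1 mx.
have [le_y eq_y] := (majorizesE y sy).1 my.
apply/(majorizesE _ sw); split => [j lt_jn|]; last first.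
  rewrite prefix_sum_comb eq_x eq_y !prefix_sum_dsort_row_total !mulr_sumr -big_split.
  by apply: eq_bigr => i _; rewrite !mxE.
apply: le_trans (prefix_sum_dsort_row_convex x y t01 (ltnW lt_jn)) _.
rewrite prefix_sum_comb; case/andP: t01 => t0 t1.
by apply: lerD; apply: ler_wpM2l; rewrite ?subr_ge0 ?le_x ?le_y.
Qed.
End Admissible.

Section BoxPerm.
Variables (R : realFieldType) (n : nat) (a b : R).
Implicit Types (x : 'rV[R]_n) (s : 'S_n).

Lemma in_box_col_perm s x : in_box a b x -> in_box a b (col_perm s x).
Proof. by move=> bx i; rewrite mxE. Qed.

Lemma in_vertices_col_perm s x : in_vertices a b x -> in_vertices a b (col_perm s x).
Proof. by move=> vx i; rewrite mxE. Qed.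

Lemma in_box_vertices x : a <= b -> in_vertices a b x -> in_box a b x.
Proof. by move=> le_ab vx i; case: (vx i) => ->; rewrite ?lexx ?le_ab. Qed.
End BoxPerm.

Section Transfer.
Variables (R : realFieldType) (n : nat).
Implicit Types (x y : 'rV[R]_n) (j k : 'I_n).

Definition transfer y j k (d : R) : 'rV[R]_n :=
  \row_i (y ord0 i + d * ((i == k)%:R - (i == j)%:R)).

Definition ndiff x y := #|[pred i | x ord0 i != y ord0 i]|.

Lemma prefix_sumS (u : 'rV[R]_n) (j : 'I_n) : prefix_sum u j.+1 = prefix_sum u j + u ord0 j.
Proof.
rewrite /prefix_sum (bigD1 j) //= addrC; congr (_ + _); apply: eq_bigl => i.
by rewrite ltnS ltn_neqAle andbC.
Qed.

Section TransferEntries.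
Variables (y : 'rV[R]_n) (j k : 'I_n) (d : R).
Hypothesis neq_jk : j != k.

Lemma transfer_j : transfer y j k d ord0 j = y ord0 j - d.
Proof. by rewrite mxE eqxx (negbTE neq_jk) /=; ring. Qed.

Lemma transfer_k : transfer y j k d ord0 k = y ord0 k + d.
Proof. by rewrite mxE eqxx eq_sym (negbTE neq_jk) /=; ring. Qed.

Lemma transfer_other i : i != j -> i != k -> transfer y j k d ord0 i = y ord0 i.
Proof. by move=> /negbTE nij /negbTE nik; rewrite mxE nij nik /=; ring. Qed.

Lemma prefix_sum_transfer m :
  prefix_sum (transfer y j k d) m = prefix_sum y m + d * ((k < m)%N%:R - (j < m)%N%:R).
Proof.
have indicator_sum (l : 'I_n) : \sum_(i < n | (i < m)%N) ((i == l)%:R : R) = (l < m)%N%:R.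
  rewrite big_mkcond (bigD1 l) //= eqxx big1 ?addr0; first by case: (l < m)%N.
  by move=> i /negbTE ->; case: (i < m)%N.
rewrite /prefix_sum (eq_bigr (fun i : 'I_n => y ord0 i + (d * (i == k)%:R - d * (i == j)%:R))).
  by rewrite big_split /= sumrB -!mulr_sumr !indicator_sum mulrBr.
by move=> i _; rewrite mxE mulrBr.
Qed.

Lemma transfer_comb : y ord0 k < y ord0 j ->
  let th := d / (y ord0 j - y ord0 k) in
  transfer y j k d = th *: col_perm (tperm j k) y + (1 - th) *: y.
Proof.
move=> lt_yk th; have nz : y ord0 j - y ord0 k != 0 by rewrite subr_eq0 gt_eqF.
apply/rowP => i; rewrite !mxE.
case: (eqVneq i j) => [->|nij]; first by rewrite ?eqxx (negbTE neq_jk) tpermL /th /=; field.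
case: (eqVneq i k) => [->|nik]; first by rewrite ?eqxx tpermR /th /=; field.
by rewrite tpermD 1?eq_sym //=; ring.
Qed.
End TransferEntries.

Lemma convex_perm_transfer (a b : R) (g : 'rV[R]_n -> R) y j k d :
  convex_on (in_box a b) g -> (forall s y, in_box a b y -> g (col_perm s y) = g y) ->
  in_box a b y -> j != k -> y ord0 k < y ord0 j -> 0 <= d <= y ord0 j - y ord0 k ->
  g (transfer y j k d) <= g y.
Proof.
move=> g_cvx g_perm by_ neq_jk lt_yk /andP[d0 le_d].
have th01 : 0 <= d / (y ord0 j - y ord0 k) <= 1.
  apply/andP; split; first by rewrite divr_ge0 // subr_ge0 ltW.
  by rewrite ler_pdivrMr ?subr_gt0 // mul1r.
rewrite transfer_comb //; apply: le_trans (g_cvx _ _ _ (in_box_col_perm _ by_) by_ th01) _.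
by rewrite g_perm // -mulrDl addrC subrK mul1r.
Qed.
End Transfer.

Section Schur.
Variables (R : realFieldType) (n : nat).
Implicit Types (x y : 'rV[R]_n).

Lemma exists_transfer_indices x y : prefix_majorizes y x -> x != y ->
  exists j k : 'I_n, [/\ (j < k)%N, x ord0 j < y ord0 j, y ord0 k < x ord0 k,
    forall i : 'I_n, (j < i)%N -> y ord0 i <= x ord0 i &
    forall i : 'I_n, (j < i < k)%N -> x ord0 i = y ord0 i].
Proof.
move=> [le_pre eq_tot] neq_xy.
have sum_eq : \sum_(i < n) x ord0 i = \sum_(i < n) y ord0 i by rewrite -!prefix_sum_total.
have [j0 lt_j0] : exists j, x ord0 j < y ord0 j.
  case: (boolP [exists j, x ord0 j < y ord0 j]) => [/existsP //|/existsPn ge_xy].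
  have ge0 (i : 'I_n) : true -> 0 <= x ord0 i - y ord0 i by rewrite subr_ge0 leNgt ge_xy.
  have sum0 : \sum_(i < n) (x ord0 i - y ord0 i) = 0 by rewrite sumrB sum_eq subrr.
  have eq0 := psumr_eq0P ge0 sum0.
  by case/negP: neq_xy; apply/eqP/rowP => i; apply/eqP; rewrite -subr_eq0 eq0.
case: (@arg_maxnP _ j0 (fun i => x ord0 i < y ord0 i) val lt_j0) => j lt_j jmax.
have y_le_x (i : 'I_n) : (j < i)%N -> y ord0 i <= x ord0 i.
  by move=> lt_ji; rewrite leNgt; apply/negP => /jmax /=; rewrite leqNgt lt_ji.
have [k0 lt_k0] : exists k : 'I_n, (j < k)%N && (y ord0 k < x ord0 k).
  case: (boolP [exists k : 'I_n, (j < k)%N && (y ord0 k < x ord0 k)]).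
    by move/existsP.
  move/existsPn => none.
  have eq_tail : \sum_(i < n | ~~ (i < j.+1)%N) x ord0 i =
      \sum_(i < n | ~~ (i < j.+1)%N) y ord0 i.
    apply: eq_bigr => i; rewrite -leqNgt => lt_ji; apply/eqP.
    by rewrite eq_le y_le_x // andbT; move: (none i); rewrite lt_ji /= -leNgt.
  have : prefix_sum x j.+1 = prefix_sum y j.+1.
    have split_sum (u : 'rV[R]_n) : \sum_(i < n) u ord0 i =
        prefix_sum u j.+1 + \sum_(i < n | ~~ (i < j.+1)%N) u ord0 i.
      exact: (bigID (fun i : 'I_n => (i < j.+1)%N)).
    by move: sum_eq; rewrite !split_sum eq_tail; apply: addIr.
  by rewrite !prefix_sumS; have := le_pre j (ltn_ord j); lra.
case: (@arg_minnP _ k0 (fun k : 'I_n => (j < k)%N && (y ord0 k < x ord0 k)) val lt_k0).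
move=> k /andP[lt_jk lt_yk] kmin.
exists j, k; split=> // i /andP[lt_ji lt_ik]; apply/eqP.
rewrite eq_le y_le_x // andbT leNgt; apply/negP => lt_yx.
by have := kmin i; rewrite lt_ji lt_yx => /(_ isT); rewrite leqNgt lt_ik.
Qed.

Lemma ltn_ord_neq (p q : 'I_n) : p != q -> (p <= q)%N -> (p < q)%N.
Proof. by move=> neq_pq le_pq; rewrite ltn_neqAle val_eqE neq_pq. Qed.

Section TransferStep.
Variables (x y : 'rV[R]_n) (j k : 'I_n).
Hypotheses (lt_jk : (j < k)%N) (lt_xj : x ord0 j < y ord0 j) (lt_yk : y ord0 k < x ord0 k).
Hypotheses (y_le_x : forall i : 'I_n, (j < i)%N -> y ord0 i <= x ord0 i)
  (x_eq_y : forall i : 'I_n, (j < i < k)%N -> x ord0 i = y ord0 i).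
Hypotheses (sx : nonincr_row x) (sy : nonincr_row y).

Let d := Num.min (y ord0 j - x ord0 j) (x ord0 k - y ord0 k).

Let neq_jk : j != k. Proof. by rewrite -val_eqE neq_ltn lt_jk. Qed.
Let d_gt0 : 0 < d. Proof. by rewrite lt_min !subr_gt0 lt_xj lt_yk. Qed.
Let le_xj : x ord0 j <= y ord0 j - d. Proof. by rewrite lerBrDr -lerBrDl ge_min lexx. Qed.
Let le_yk : y ord0 k + d <= x ord0 k. Proof. by rewrite -lerBrDl ge_min lexx orbT. Qed.
Let le_xkj : x ord0 k <= x ord0 j. Proof. exact/sx/ltnW. Qed.
Let transfer_jE := transfer_j y d neq_jk.
Let transfer_kE := transfer_k y d neq_jk.

Lemma transfer_nonincr : nonincr_row (transfer y j k d).
Proof.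
move: d_gt0 le_xj le_yk le_xkj => ? ? ? ? i l le_il.
case: (eqVneq l j) => [elj|nlj].
  rewrite elj in le_il *; case: (eqVneq i j) => [->|nij]; first exact: lexx.
  have nik : i != k by rewrite -val_eqE ltn_eqF // (leq_ltn_trans le_il).
  by rewrite transfer_jE transfer_other //; have := sy le_il; lra.
case: (eqVneq l k) => [elk|nlk].
  rewrite elk in le_il *; rewrite transfer_kE.
  case: (eqVneq i j) => [->|nij]; first by rewrite transfer_jE; lra.
  case: (eqVneq i k) => [->|nik]; first by rewrite transfer_kE.
  rewrite transfer_other //; case: (ltnP i j) => [lt_ij|le_ji].
    by have := sy (ltnW lt_ij); lra.
  have lt_ji : (j < i)%N by rewrite ltn_ord_neq // eq_sym.
  have lt_ik : (i < k)%N by rewrite ltn_ord_neq.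
  by rewrite -(@x_eq_y i) ?lt_ji ?lt_ik //; have := sx le_il; lra.
rewrite (transfer_other _ _ nlj nlk); case: (eqVneq i j) => [eij|nij].
  rewrite eij transfer_jE in le_il *; have lt_jl : (j < l)%N by rewrite ltn_ord_neq // eq_sym.
  by have := y_le_x lt_jl; have := sx (ltnW lt_jl); lra.
case: (eqVneq i k) => [eik|nik]; last by rewrite transfer_other //; apply: sy.
by rewrite eik transfer_kE in le_il *; have := sy le_il; lra.
Qed.

Lemma transfer_in_box (a b : R) : in_box a b x -> in_box a b y -> in_box a b (transfer y j k d).
Proof.
move: d_gt0 le_xj le_yk => ? ? ? bx by_ i.
case: (eqVneq i j) => [->|nij].
  by rewrite transfer_jE; have /andP[? ?] := bx j; have /andP[? ?] := by_ j; apply/andP; split; lra.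
case: (eqVneq i k) => [->|nik]; last by rewrite transfer_other.
by rewrite transfer_kE; have /andP[? ?] := bx k; have /andP[? ?] := by_ k; apply/andP; split; lra.
Qed.

Lemma transfer_prefix_majorizes : prefix_majorizes y x -> prefix_majorizes (transfer y j k d) x.
Proof.
move=> [le_pre eq_tot]; split=> [m lt_mn|]; last first.
  by rewrite prefix_sum_transfer eq_tot !ltn_ord subrr mulr0 addr0.
rewrite prefix_sum_transfer; case: (ltnP k m) => [lt_km|le_mk].
  by rewrite (ltn_trans lt_jk lt_km) subrr mulr0 addr0 le_pre.
case: (ltnP j m) => [lt_jm|le_mj]; last by rewrite subrr mulr0 addr0 le_pre.
(* Entries strictly between [j] and [m <= k] agree, so the gap at [m] is the gap at [j]
   plus [y j - x j]. *)
have gap : y ord0 j - x ord0 j <= prefix_sum y m - prefix_sum x m.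
  rewrite /prefix_sum -sumrB (bigID (fun i : 'I_n => (i < j)%N)) /=.
  have -> : \sum_(i < n | (i < m)%N && (i < j)%N) (y ord0 i - x ord0 i) =
      prefix_sum y j - prefix_sum x j.
    rewrite /prefix_sum -sumrB; apply: eq_bigl => i.
    by case lt_ij: (i < j)%N; rewrite ?andbT ?andbF // (ltn_trans lt_ij lt_jm).
  rewrite (bigD1 j) /= ?lt_jm ?ltnn // big1.
    by have := le_pre j (ltn_ord j); lra.
  move=> i /andP[/andP[lt_im nlt_ij] nij]; rewrite x_eq_y ?subrr //.
  have lt_ji : (j < i)%N by apply: ltn_ord_neq; rewrite 1?eq_sym // leqNgt.
  by rewrite lt_ji (leq_trans lt_im le_mk).
by rewrite sub0r mulrN1; have := le_pre m lt_mn; have := le_xj; have := d_gt0; lra.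
Qed.

Lemma ndiff_transfer : (ndiff x (transfer y j k d) < ndiff x y)%N.
Proof.
apply: proper_card; apply/properP; split.
  apply/subsetP => i; rewrite !inE; case: (eqVneq i j) => [->|nij]; first by rewrite (lt_eqF lt_xj).
  case: (eqVneq i k) => [->|nik]; first by rewrite (gt_eqF lt_yk).
  by rewrite transfer_other.
case: (lerP (y ord0 j - x ord0 j) (x ord0 k - y ord0 k)) => cmp.
  exists j; first by rewrite inE (lt_eqF lt_xj).
  by rewrite inE negbK transfer_jE /d (min_l cmp) opprB addrCA subrr addr0.
exists k; first by rewrite inE (gt_eqF lt_yk).
by rewrite inE negbK transfer_kE /d (min_r (ltW cmp)) addrCA subrr addr0.
Qed.

Lemma convex_perm_transfer_step (a b : R) (g : 'rV[R]_n -> R) :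
  convex_on (in_box a b) g -> (forall s y, in_box a b y -> g (col_perm s y) = g y) ->
  in_box a b y -> g (transfer y j k d) <= g y.
Proof.
move=> g_cvx g_perm by_.
have lt_ykj : y ord0 k < y ord0 j := lt_trans lt_yk (le_lt_trans le_xkj lt_xj).
apply: (convex_perm_transfer g_cvx g_perm by_ neq_jk lt_ykj).
apply/andP; split; first exact: ltW.
apply: le_trans (_ : d <= y ord0 j - x ord0 j) _; first by rewrite ge_min lexx.
by rewrite lerD2l lerN2 ltW // (lt_le_trans lt_yk le_xkj).
Qed.
End TransferStep.

Lemma schur_convex_sorted (a b : R) (g : 'rV[R]_n -> R) x y :
  convex_on (in_box a b) g -> (forall s y, in_box a b y -> g (col_perm s y) = g y) ->
  in_box a b x -> in_box a b y -> nonincr_row x -> nonincr_row y ->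
  prefix_majorizes y x -> g x <= g y.
Proof.
move=> g_cvx g_perm bx + sx; have [N] := ubnP (ndiff x y); elim: N y => // N IH y.
rewrite ltnS => le_diff by_ sy maj; have [->|neq_xy] := eqVneq x y; first exact: lexx.
have [j [k [lt_jk lt_xj lt_yk y_le_x x_eq_y]]] := exists_transfer_indices maj neq_xy.
apply: le_trans (convex_perm_transfer_step lt_jk lt_xj lt_yk sx g_cvx g_perm by_).
apply: IH.
- exact: leq_trans (ndiff_transfer lt_jk lt_xj lt_yk) le_diff.
- exact: transfer_in_box.
- exact: transfer_nonincr lt_jk lt_xj lt_yk y_le_x x_eq_y sx sy.
- exact: transfer_prefix_majorizes.
Qed.
End Schur.

Section Jensen.
Variables (R : realFieldType) (n : nat) (C : 'rV[R]_n -> Prop) (h : 'rV[R]_n -> R).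
Hypothesis C_comb : forall x y t, 0 <= t <= 1 -> C x -> C y -> C (t *: x + (1 - t) *: y).
Hypothesis h_cvx : convex_on C h.

Lemma jensen N (w : nat -> R) (p : nat -> 'rV[R]_n) :
  (forall j, (j < N)%N -> 0 <= w j) -> \sum_(j < N) w j = 1 ->
  (forall j, (j < N)%N -> C (p j)) ->
  C (\sum_(j < N) w j *: p j) /\ h (\sum_(j < N) w j *: p j) <= \sum_(j < N) w j * h (p j).
Proof.
elim: N w => [|N IH] w w_ge0 sum_w Cp.
  by move: sum_w; rewrite big_ord0 => /eqP; rewrite eq_sym oner_eq0.
rewrite !big_ord_recr /=; set W := \sum_(j < N) w j.
have wN : w N = 1 - W by rewrite -sum_w big_ord_recr /= addrAC subrr add0r.
have W_ge0 : 0 <= W by apply: sumr_ge0 => j _; exact: w_ge0 (ltnW (ltn_ord _)).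
have [W0|W_neq0] := eqVneq W 0.
  have w0 (j : 'I_N) : w j = 0.
    by apply: (psumr_eq0P _ W0) => // i _; exact: w_ge0 (ltnW (ltn_ord _)).
  rewrite !big1 ?add0r => [|j _|j _]; rewrite ?w0 ?mul0r ?scale0r //.
  by rewrite wN W0 subr0 scale1r mul1r; split; [apply: Cp | apply: lexx].
have W_gt0 : 0 < W by rewrite lt_def W_neq0.
have sum_wW : \sum_(j < N) w j / W = 1 by rewrite -mulr_suml mulfV.
have [Cq le_hq] := IH (fun j => w j / W)
  (fun j lt_jN => divr_ge0 (w_ge0 j (ltnW lt_jN)) W_ge0) sum_wW (fun j lt_jN => Cp j (ltnW lt_jN)).
set q := \sum_(j < N) (w j / W) *: p j in Cq le_hq.
have -> : \sum_(j < N) w j *: p j = W *: q.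
  by rewrite scaler_sumr; apply: eq_bigr => j _; rewrite scalerA mulrCA mulfV ?mulr1.
have -> : \sum_(j < N) w j * h (p j) = W * \sum_(j < N) (w j / W) * h (p j).
  by rewrite mulr_sumr; apply: eq_bigr => j _; rewrite mulrA mulrCA mulfV ?mulr1.
have wN01 : 0 <= w N <= 1 by rewrite w_ge0 //= wN lerBlDr lerDl.
have eW : 1 - w N = W by rewrite wN; lra.
have := C_comb wN01 (Cp N (ltnSn N)) Cq; have := h_cvx (Cp N (ltnSn N)) Cq wN01.
rewrite eW addrC [X in _ <= X]addrC => cvx comb; split=> //.
by apply: le_trans cvx _; rewrite lerD2r ler_wpM2l.
Qed.
End Jensen.

Section Telescoping.
Variable R : comPzRingType.
Implicit Types (T ph : nat -> R).

Lemma sum_telescope T N : \sum_(j < N) (T j - T j.+1) = T 0%N - T N.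
Proof. by elim: N => [|N IH]; rewrite ?big_ord0 ?subrr // big_ord_recr /= IH; ring. Qed.

Lemma sum_telescope_gt T N i : (i < N)%N ->
  \sum_(j < N) (T j - T j.+1) * (i < j)%N%:R = T i.+1 - T N.
Proof.
elim: N => [//|N IH]; rewrite ltnS leq_eqVlt => /orP[/eqP->|lt_iN].
  rewrite big_ord_recr /= ltnn mulr0 addr0 big1 ?subrr // => j _.
  by rewrite ltnNge (ltnW (ltn_ord j)) mulr0.
by rewrite big_ord_recr /= IH // lt_iN mulr1; ring.
Qed.

Lemma abel_summation T ph N :
  \sum_(j < N.+1) (T j - T j.+1) * ph j =
  T 0%N * ph 0%N + \sum_(j < N) T j.+1 * (ph j.+1 - ph j) - T N.+1 * ph N.
Proof.
elim: N => [|N IH]; first by rewrite big_ord1 big_ord0; ring.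
by rewrite big_ord_recr /= IH [in RHS]big_ord_recr /=; ring.
Qed.
End Telescoping.

Section VertexDecomposition.
Variables (R : realFieldType) (n : nat) (a b : R).
Hypothesis lt_ab : a < b.
Implicit Types (u v : 'rV[R]_n) (phi : 'rV[R]_n -> R).

Definition level u (k : nat) : R := if insub k is Some i then (u ord0 i - a) / (b - a) else 0.
Definition shifted_level u (j : nat) : R := if j is j'.+1 then level u j' else 1.
Definition vertex_weight u (j : nat) : R := shifted_level u j - shifted_level u j.+1.

Lemma level_ord u (i : 'I_n) : level u i = (u ord0 i - a) / (b - a).
Proof. by rewrite /level valK. Qed.

Lemma level_ge u k : (n <= k)%N -> level u k = 0.
Proof. by move=> le_nk; rewrite /level insubF // ltnNge le_nk. Qed.

Lemma level_01 u k : in_box a b u -> 0 <= level u k <= 1.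
Proof.
move=> bu; case: (ltnP k n) => [lt_kn|le_nk]; last by rewrite level_ge // lexx ler01.
rewrite (level_ord u (Ordinal lt_kn)); have /andP[ua ub] := bu (Ordinal lt_kn).
apply/andP; split; first by apply: divr_ge0; rewrite subr_ge0 // ltW.
by rewrite ler_pdivrMr ?subr_gt0 // mul1r lerD2r.
Qed.

Lemma vertex_weight_ge0 u j : in_box a b u -> nonincr_row u -> 0 <= vertex_weight u j.
Proof.
move=> bu su; rewrite subr_ge0; case: j => [|j] /=; first by case/andP: (level_01 0 bu).
case: (ltnP j.+1 n) => [lt_jn|le_nj]; last by rewrite level_ge //; case/andP: (level_01 j bu).
rewrite (level_ord u (Ordinal lt_jn)) (level_ord u (Ordinal (ltnW lt_jn))).
by rewrite ler_pM2r ?invr_gt0 ?subr_gt0 // lerD2r; apply: su => /=.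
Qed.

Lemma sum_vertex_weight u : \sum_(j < n.+1) vertex_weight u j = 1.
Proof. by rewrite sum_telescope /= level_ge // subr0. Qed.

Lemma vertex_decomposition u : u = \sum_(j < n.+1) vertex_weight u j *: pcol n a b j.
Proof.
apply/rowP => i; rewrite summxE.
rewrite (eq_bigr (fun j : 'I_n.+1 =>
    vertex_weight u j * a + (b - a) * (vertex_weight u j * (i < j)%N%:R))).
  have lt_in1 : (i < n.+1)%N := ltnW (ltn_ord i).
  rewrite big_split /= -mulr_suml sum_vertex_weight -mulr_sumr (sum_telescope_gt _ lt_in1).
  by rewrite /= (level_ge u (leqnn n)) level_ord; field; rewrite subr_eq0 gt_eqF.
by move=> j _; rewrite !mxE; case: (i < j)%N => /=; ring.
Qed.

Lemma ffun_f_vertex_decomposition phi u :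
  ffun_f a b phi u = \sum_(j < n.+1) vertex_weight u j * phi (pcol n a b j).
Proof.
rewrite /vertex_weight (abel_summation (shifted_level u) (fun j => phi (pcol n a b j))).
rewrite /= level_ge // mul0r subr0 mul1r /ffun_f.
by congr (_ + _); apply: eq_bigr => i _; rewrite level_ord.
Qed.

Lemma ffun_f_comb phi u v t :
  ffun_f a b phi (t *: u + (1 - t) *: v) = t * ffun_f a b phi u + (1 - t) * ffun_f a b phi v.
Proof.
rewrite /ffun_f !mulrDr !mulr_sumr addrACA -mulrDl subrKC mul1r -big_split.
by congr (_ + _); apply: eq_bigr => i _; rewrite !mxE /=; ring.
Qed.

Lemma pcol_vertices j : in_vertices a b (pcol n a b j).
Proof. by move=> i; rewrite mxE; case: ifP; [right | left]. Qed.

Lemma vertex_weight_pcol k j : (k <= n)%N -> vertex_weight (pcol n a b k) j = (j == k)%:R.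
Proof.
move=> le_kn; have level_pcol i : level (pcol n a b k) i = (i < k)%N%:R.
  case: (ltnP i n) => [lt_in|le_ni]; last by rewrite level_ge // ltnNge (leq_trans le_kn le_ni).
  rewrite (level_ord _ (Ordinal lt_in)) mxE /=.
  by case: (i < k)%N; rewrite ?subrr ?mul0r ?divff // subr_eq0 gt_eqF.
rewrite /vertex_weight; case: j => [|j] /=; rewrite !level_pcol.
  by case: (posnP k) => [->|k_gt0]; rewrite ?subr0 // eq_sym gtn_eqF ?subrr.
by case: (ltngtP j.+1 k); rewrite ?subrr ?subr0.
Qed.

Lemma ffun_f_pcol phi k : (k <= n)%N -> ffun_f a b phi (pcol n a b k) = phi (pcol n a b k).
Proof.
move=> le_kn; rewrite ffun_f_vertex_decomposition (bigD1 (Ordinal (le_kn : k < n.+1)%N)) //=.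
rewrite vertex_weight_pcol // eqxx mul1r big1 ?addr0 // => j.
by rewrite -val_eqE /= => /negbTE neq_jk; rewrite vertex_weight_pcol // neq_jk mul0r.
Qed.
End VertexDecomposition.

Section Envelope.
Variables (R : realFieldType) (n : nat) (a b : R) (phi g : 'rV[R]_n -> R).
Hypothesis lt_ab : a < b.

Lemma le_ffun_f u : convex_on (in_box a b) g -> (forall v, in_vertices a b v -> g v <= phi v) ->
  in_box a b u -> nonincr_row u -> g u <= ffun_f a b phi u.
Proof.
move=> g_cvx g_le bu su.
rewrite [in g u](vertex_decomposition lt_ab u) ffun_f_vertex_decomposition.
have [_ ] := jensen (@in_box_comb R n a b) g_cvx (fun j _ => vertex_weight_ge0 lt_ab j bu su)
  (sum_vertex_weight a b u) (fun j _ => in_box_vertices (ltW lt_ab) (pcol_vertices a b j)).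
move/le_trans; apply; apply: ler_sum => j _.
by apply: ler_wpM2l; [apply: vertex_weight_ge0 | apply/g_le/pcol_vertices].
Qed.

Lemma nonincr_vertex_pcol v : in_vertices a b v -> nonincr_row v ->
  exists2 k, (k <= n)%N & v = pcol n a b k.
Proof.
move=> vv sv; case: (boolP [exists i, v ord0 i == a]) => [/existsP[i0 vi0]|/existsPn no_a].
  case: (@arg_minnP _ i0 (fun i => v ord0 i == a) val vi0) => k /eqP vk kmin.
  exists k; first exact: ltnW.
  apply/rowP => i; rewrite mxE; case: ltnP => [lt_ik|le_ki].
    by case: (vv i) => // via; have := kmin i; rewrite via eqxx => /(_ isT); rewrite leqNgt lt_ik.
  by have := sv _ _ le_ki; rewrite vk; case: (vv i) => // ->; rewrite leNgt lt_ab.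
exists n => //; apply/rowP => i; rewrite mxE ltn_ord.
by case: (vv i) => // via; have := no_a i; rewrite via eqxx.
Qed.

Lemma conv_env_perm_invariant :
  perm_invariant_on (in_box a b) phi -> is_conv_env (in_box a b) (in_vertices a b) phi g ->
  forall s y, in_box a b y -> g (col_perm s y) = g y.
Proof.
move=> phi_perm [g_cvx g_le g_max].
have le_perm (s : 'S_n) y : in_box a b y -> g (col_perm s y) <= g y.
  apply: (g_max (fun y => g (col_perm s y))) => [x z t bx bz t01|v vv].
    have -> : col_perm s (t *: x + (1 - t) *: z) = t *: col_perm s x + (1 - t) *: col_perm s z.
      by apply/rowP => i; rewrite !mxE.
    by apply: g_cvx => //; apply: in_box_col_perm.
  apply: le_trans (g_le _ (in_vertices_col_perm s vv)) _.
  by rewrite phi_perm //; apply: in_box_vertices (ltW lt_ab) vv.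
move=> s y by_; apply/eqP; rewrite eq_le le_perm //=.
have {1}-> : y = col_perm s^-1 (col_perm s y) by apply/rowP => i; rewrite !mxE permKV.
by apply: le_perm; apply: in_box_col_perm.
Qed.

Lemma conv_env_le_ffun_f x u :
  perm_invariant_on (in_box a b) phi -> is_conv_env (in_box a b) (in_vertices a b) phi g ->
  in_box a b x -> admissible a b x u -> g x <= ffun_f a b phi u.
Proof.
move=> phi_perm genv bx [mu [bu su]].
have g_perm := conv_env_perm_invariant phi_perm genv.
have [g_cvx g_le _] := genv; have [s es] := exists_perm_dsort_row x.
rewrite -(g_perm s x bx) es; apply: le_trans (le_ffun_f g_cvx g_le bu su).
apply: (schur_convex_sorted g_cvx g_perm) => //; last exact/majorizesE.
  by rewrite -es; apply: in_box_col_perm.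
exact: nonincr_dsort_row.
Qed.
End Envelope.

Section LinearProgramming.
Variable R : realFieldType.

Definition aff := ((nat -> R) * R)%type.

Definition aff_eval m (F : aff) (y : nat -> R) : R := \sum_(i < m) F.1 i * y i + F.2.

Definition lp_feasible m (C : seq aff) (y : nat -> R) : Prop :=
  (forall i, (i < m)%N -> 0 <= y i <= 1) /\ (forall F, List.In F C -> 0 <= aff_eval m F y).

Definition aff_subst m (F K : aff) : aff :=
  (fun i => F.1 i + F.1 m * K.1 i, F.2 + F.1 m * K.2).

Definition aff_root m (F : aff) : aff :=
  (fun i => - (F.1 m)^-1 * F.1 i, - (F.1 m)^-1 * F.2).

Definition aff_coord m : aff := (fun i => if i == m then 1 else 0, 0).
Definition aff_cocoord m : aff := (fun i => if i == m then -1 else 0, 1).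
Definition box_cons m C := aff_coord m :: aff_cocoord m :: C.
Definition subst_cons m C K := List.map (aff_subst m ^~ K) (box_cons m C).

Definition set_coord m (y : nat -> R) z : nat -> R := fun i => if i == m then z else y i.

Lemma aff_eval_recr m F y : aff_eval m.+1 F y = aff_eval m F y + F.1 m * y m.
Proof. by rewrite /aff_eval big_ord_recr /= addrAC. Qed.

Lemma eq_aff_eval m F y y' :
  (forall i, (i < m)%N -> y i = y' i) -> aff_eval m F y = aff_eval m F y'.
Proof. by move=> eqy; rewrite /aff_eval; congr (_ + _); apply: eq_bigr => i _; rewrite eqy. Qed.

Lemma aff_eval_set_coord m F y z : aff_eval m F (set_coord m y z) = aff_eval m F y.
Proof. by apply: eq_aff_eval => i lt_im; rewrite /set_coord (ltn_eqF lt_im). Qed.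

Lemma aff_eval_subst m F K y :
  aff_eval m (aff_subst m F K) y = aff_eval m F y + F.1 m * aff_eval m K y.
Proof.
rewrite /aff_eval /= mulrDr big_distrr /= addrACA -big_split /=.
by congr (_ + _); apply: eq_bigr => i _; rewrite mulrDl -mulrA.
Qed.

Lemma aff_eval_split_root m F y w : F.1 m != 0 ->
  aff_eval m F y + F.1 m * w = F.1 m * (w - aff_eval m (aff_root m F) y).
Proof.
move=> nzF; have -> : aff_eval m (aff_root m F) y = - (F.1 m)^-1 * aff_eval m F y.
  by rewrite /aff_eval /= mulrDr big_distrr /=; congr (_ + _); apply: eq_bigr => i _; rewrite mulrA.
by rewrite mulrBr mulNr mulrN opprK mulrA mulfV // mul1r addrC.
Qed.

Lemma aff_eval_coord m y : aff_eval m (aff_coord m) y = 0.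
Proof. by rewrite /aff_eval big1 ?addr0 // => i _; rewrite /= ltn_eqF ?mul0r. Qed.

Lemma aff_eval_cocoord m y : aff_eval m (aff_cocoord m) y = 1.
Proof. by rewrite /aff_eval big1 ?add0r // => i _; rewrite /= ltn_eqF ?mul0r. Qed.

Lemma lp_feasibleS m C y :
  lp_feasible m.+1 C y <-> (forall i, (i < m)%N -> 0 <= y i <= 1) /\
                          (forall F, List.In F (box_cons m C) -> 0 <= aff_eval m.+1 F y).
Proof.
have coordE : aff_eval m.+1 (aff_coord m) y = y m.
  by rewrite aff_eval_recr aff_eval_coord /= eqxx add0r mul1r.
have cocoordE : aff_eval m.+1 (aff_cocoord m) y = 1 - y m.
  by rewrite aff_eval_recr aff_eval_cocoord /= eqxx mulN1r.
split=> [[box cons]|[box cons]].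
  split=> [i lt_im|F [<-|[<-|CF]]]; [exact/box/ltnW| | |exact: cons].
    by rewrite coordE; case/andP: (box m (ltnSn m)).
  by rewrite cocoordE subr_ge0; case/andP: (box m (ltnSn m)).
split=> [i|F CF]; last by apply: cons; do 2 right.
rewrite ltnS leq_eqVlt => /orP[/eqP->|]; last exact: box.
have := cons _ (or_introl erefl); have := cons _ (or_intror (or_introl erefl)).
by rewrite coordE cocoordE subr_ge0 => -> ->.
Qed.

Lemma exists_argmin_union (T Y : Type) (feas : T -> Y -> Prop) (V : T -> Y -> R)
    (L : seq T) :
  (forall K, List.In K L -> forall y0, feas K y0 ->
     exists2 y, feas K y & forall y', feas K y' -> V K y <= V K y') ->
  forall K0 y0, List.In K0 L -> feas K0 y0 ->
  exists K y, [/\ List.In K L, feas K y &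
    forall K' y', List.In K' L -> feas K' y' -> V K y <= V K' y'].
Proof.
elim: L => [//|K1 L IH] minK K0 y0 /= LK0 Fy0.
have minK1 := minK K1 (or_introl erefl).
have [[K2 [y2 [LK2 Fy2]]]|noL] := Classical_Prop.classic (exists K y, List.In K L /\ feas K y).
  have [K [y [LK Fy minKy]]] := IH (fun K LK => minK K (or_intror LK)) K2 y2 LK2 Fy2.
  have [[y1 Fy1]|no1] := Classical_Prop.classic (exists y1, feas K1 y1); last first.
    exists K, y; split=> [|//|K' y' [eK|LK'] Fy']; [by right| |exact: minKy].
    by case: no1; exists y'; rewrite eK.
  have [y1' Fy1' min1] := minK1 y1 Fy1.
  case: (lerP (V K1 y1') (V K y)) => cmp.
    exists K1, y1'; split=> [|//|K' y' [<-|LK'] Fy']; [by left|exact: min1|].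
    exact: le_trans cmp (minKy _ _ LK' Fy').
  exists K, y; split=> [|//|K' y' [<-|LK'] Fy']; [by right| |exact: minKy].
  exact: le_trans (ltW cmp) (min1 _ Fy').
case: LK0 => [eK0|LK0]; last by case: noL; exists K0, y0.
subst K0; have [y1 Fy1 min1] := minK1 y0 Fy0.
exists K1, y1; split=> [|//|K' y' [<-|LK'] Fy']; [by left|exact: min1|].
by case: noL; exists K', y'.
Qed.

Lemma exists_argmax (T : Type) (v : T -> R) (P : pred T) (L : seq T) K0 :
  List.In K0 L -> P K0 ->
  exists2 K, List.In K L /\ P K & forall K', List.In K' L -> P K' -> v K' <= v K.
Proof.
move=> LK0 PK0.
have trivial_min : forall K, List.In K L -> forall y0 : unit, P K ->
    exists2 y : unit, P K & forall y' : unit, P K -> - v K <= - v K.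
  by move=> K _ y0 PK; exists y0.
have [K [_ [LK PK maxK]]] := exists_argmin_union
  (feas := fun K (_ : unit) => P K) (V := fun K _ => - v K) trivial_min (y0 := tt) LK0 PK0.
by exists K => // K' LK' PK'; rewrite -lerN2; exact: maxK K' tt LK' PK'.
Qed.

(* [K] is the tightest lower bound on [y m] if [c >= 0], the tightest upper bound otherwise. *)
Lemma exists_tight_root m C (c : R) y z :
  (forall F, List.In F (box_cons m C) -> 0 <= aff_eval m F y + F.1 m * z) ->
  exists2 K, List.In K (List.map (aff_root m) (box_cons m C)) &
    (forall F, List.In F (box_cons m C) -> 0 <= aff_eval m F y + F.1 m * aff_eval m K y) /\
    c * aff_eval m K y <= c * z.
Proof.
set D := box_cons m C; set r := fun F => aff_eval m (aff_root m F) y => cons.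
have root_le F : List.In F D -> 0 < F.1 m -> r F <= z.
  move=> DF sF; have := cons F DF; rewrite aff_eval_split_root ?gt_eqF //.
  by rewrite pmulr_rge0 // subr_ge0.
have root_ge F : List.In F D -> F.1 m < 0 -> z <= r F.
  move=> DF sF; have := cons F DF; rewrite aff_eval_split_root ?lt_eqF //.
  by rewrite nmulr_rge0 // subr_le0.
have coord_pos : 0 < (aff_coord m).1 m by rewrite /= eqxx ltr01.
have cocoord_neg : (aff_cocoord m).1 m < 0 by rewrite /= eqxx ltrN10.
case: (lerP 0 c) => c0.
  have [K [DK sK] maxK] := @exists_argmax _ r (fun F => 0 < F.1 m) D _
    (or_introl erefl) coord_pos.
  exists (aff_root m K); first exact: List.in_map.
  split; last exact/ler_wpM2l/root_le.
  move=> F DF; case: (lerP (F.1 m) 0) => sF.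
    by apply: le_trans (cons F DF) _; rewrite lerD2l; apply/ler_wnM2l/root_le.
  rewrite aff_eval_split_root ?gt_eqF //; apply: mulr_ge0 (ltW sF) _.
  by rewrite subr_ge0; apply: maxK.
have [K [DK sK] minK] := @exists_argmax _ (fun F => - r F) (fun F => F.1 m < 0) D _
  (or_intror (or_introl erefl)) cocoord_neg.
exists (aff_root m K); first exact: List.in_map.
split; last exact/ler_wnM2l/root_ge/sK/DK/ltW.
move=> F DF; case: (lerP 0 (F.1 m)) => sF.
  by apply: le_trans (cons F DF) _; rewrite lerD2l; apply/ler_wpM2l/root_ge.
rewrite aff_eval_split_root ?lt_eqF //; apply: mulr_le0 (ltW sF) _.
by rewrite subr_le0 -lerN2; apply: minK.
Qed.

Lemma lp_elim_last m C f y : lp_feasible m.+1 C y ->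
  exists2 K, List.In K (List.map (aff_root m) (box_cons m C)) &
    lp_feasible m (subst_cons m C K) y /\
    aff_eval m (aff_subst m f K) y <= aff_eval m.+1 f y.
Proof.
move=> /lp_feasibleS [box cons].
have cons' F : List.In F (box_cons m C) -> 0 <= aff_eval m F y + F.1 m * y m.
  by move/cons; rewrite aff_eval_recr.
have [K DK [consK le_f]] := exists_tight_root (f.1 m) cons'.
exists K => //; split; last by rewrite aff_eval_subst aff_eval_recr lerD2l.
by split=> // F /List.in_map_iff [G [<- DG]]; rewrite aff_eval_subst; apply: consK.
Qed.

Lemma lp_min_attained m C f : (exists y, lp_feasible m C y) ->
  exists2 y, lp_feasible m C y & forall y', lp_feasible m C y' -> aff_eval m f y <= aff_eval m f y'.
Proof.
elim: m C f => [|m IH] C f [y0 Fy0].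
  by exists y0 => // y' _; rewrite /aff_eval !big_ord0.
have [K0 DK0 [FK0 _]] := lp_elim_last f Fy0.
have [K [y [DK FKy minKy]]] := exists_argmin_union
  (V := fun K => aff_eval m (aff_subst m f K))
  (fun K _ y1 Fy1 => IH _ (aff_subst m f K) (ex_intro _ y1 Fy1)) DK0 FK0.
exists (set_coord m y (aff_eval m K y)).
  apply/lp_feasibleS; split=> [i lt_im|F DF].
    by rewrite /set_coord (ltn_eqF lt_im); case: FKy => box _; apply: box.
  rewrite aff_eval_recr aff_eval_set_coord /set_coord eqxx -aff_eval_subst.
  by case: FKy => _; apply; apply: (List.in_map (aff_subst m ^~ K)).
move=> y' Fy'; have [K' DK' [FK' le_f]] := lp_elim_last f Fy'.
rewrite aff_eval_recr aff_eval_set_coord /set_coord eqxx -aff_eval_subst.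
exact: le_trans (minKy _ _ DK' FK') le_f.
Qed.

End LinearProgramming.

Section AdmissibleLP.
Variables (R : realFieldType) (n : nat) (a b : R) (x : 'rV[R]_n).
Hypothesis lt_ab : a < b.
Implicit Types (t : nat -> R) (u : 'rV[R]_n) (phi : 'rV[R]_n -> R).

Definition row_of_levels t : 'rV[R]_n := \row_i (a + (b - a) * t i).

Definition aff_step k : aff R := (fun i => (i == k)%:R - (i == k.+1)%:R, 0).
Definition aff_prefix j : aff R :=
  (fun i => if (i < j)%N then b - a else 0,
   \sum_(i < n | (i < j)%N) a - prefix_sum (dsort_row x) j).
Definition aff_opp (F : aff R) : aff R := (fun i => - F.1 i, - F.2).
Definition ffun_f_aff phi : aff R :=
  (fun i => phi (pcol n a b i.+1) - phi (pcol n a b i), phi (pcol n a b 0)).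

(* In the levels [t = level a b u], [admissible a b x u] is a system of affine inequalities. *)
Definition admissible_cons : seq (aff R) :=
  (List.map aff_step (List.seq 0 n.-1) ++ List.map aff_prefix (List.seq 0 n) ++
   [:: aff_prefix n; aff_opp (aff_prefix n)])%list.

Lemma aff_eval_step t k : (k.+1 < n)%N -> aff_eval n (aff_step k) t = t k - t k.+1.
Proof.
move=> lt_kn.
have ord_sum (l : nat) : (l < n)%N -> \sum_(i < n) (i == l :> nat)%:R * t i = t l.
  move=> lt_ln; rewrite (bigD1 (Ordinal lt_ln)) //= eqxx mul1r big1 ?addr0 // => i.
  by rewrite -val_eqE /= => /negbTE ->; rewrite mul0r.
rewrite /aff_eval addr0.
rewrite (eq_bigr (fun i : 'I_n => (i == k :> nat)%:R * t i - (i == k.+1 :> nat)%:R * t i)).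
  by rewrite sumrB !ord_sum // ltnW.
by move=> i _; rewrite mulrBl.
Qed.

Lemma aff_eval_prefix t j :
  aff_eval n (aff_prefix j) t = prefix_sum (row_of_levels t) j - prefix_sum (dsort_row x) j.
Proof.
rewrite /aff_eval /prefix_sum /= addrA; congr (_ - _).
rewrite [RHS](eq_bigr (fun i : 'I_n => a + (b - a) * t i)) => [|i _]; last by rewrite mxE.
rewrite big_split /= addrC; congr (_ + _).
by rewrite [RHS]big_mkcond; apply: eq_bigr => i _; case: (i < j)%N; rewrite ?mul0r.
Qed.

Lemma aff_eval_opp (F : aff R) t : aff_eval n (aff_opp F) t = - aff_eval n F t.
Proof. by rewrite /aff_eval opprD -sumrN; congr (_ + _); apply: eq_bigr => i _; rewrite mulNr. Qed.

Lemma aff_eval_ffun_f phi t : aff_eval n (ffun_f_aff phi) t = ffun_f a b phi (row_of_levels t).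
Proof.
rewrite /aff_eval /ffun_f /= addrC; congr (_ + _); apply: eq_bigr => i _.
by rewrite mxE mulrC; congr (_ * _); field; rewrite subr_eq0 gt_eqF.
Qed.

Lemma row_of_levels_level u : row_of_levels (level a b u) = u.
Proof. by apply/rowP => i; rewrite mxE level_ord; field; rewrite subr_eq0 gt_eqF. Qed.

Lemma admissible_lp_feasible u :
  admissible a b x u -> lp_feasible n admissible_cons (level a b u).
Proof.
move=> [mu [bu su]]; have [le_pre eq_tot] := (majorizesE x su).1 mu.
split=> [i _|F]; first exact: level_01.
move/List.in_app_iff => [/List.in_map_iff[k [<- /List.in_seq lt_k]]|].
  rewrite aff_eval_step; last by lia.
  by have := vertex_weight_ge0 lt_ab k.+1 bu su.
move/List.in_app_iff => [/List.in_map_iff[j [<- /List.in_seq lt_j]]|].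
  by rewrite aff_eval_prefix row_of_levels_level subr_ge0 le_pre //; lia.
case=> [<-|[<-|[]]]; rewrite ?aff_eval_opp aff_eval_prefix row_of_levels_level eq_tot subrr //.
by rewrite oppr0.
Qed.

Lemma lp_feasible_admissible t :
  lp_feasible n admissible_cons t -> admissible a b x (row_of_levels t).
Proof.
move=> [box cons].
have cons_prefix j : (j < n)%N -> prefix_sum (dsort_row x) j <= prefix_sum (row_of_levels t) j.
  move=> lt_jn; rewrite -subr_ge0 -aff_eval_prefix; apply: cons.
  apply/List.in_app_iff; right; apply/List.in_app_iff; left.
  by apply/List.in_map/List.in_seq; lia.
have step k : (k.+1 < n)%N -> t k.+1 <= t k.
  move=> lt_kn; rewrite -subr_ge0 -aff_eval_step //; apply: cons.
  by apply/List.in_app_iff; left; apply/List.in_map/List.in_seq; lia.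
have mono (i j : 'I_n) : (i <= j)%N -> t j <= t i.
  move=> le_ij.
  apply: (@homo_leq_in _ [pred k | (k < n)%N] t (fun u v : R => v <= u) _ _ _ _ i j);
    rewrite ?inE ?ltn_ord //.
  - by move=> u v w le_vu le_wv; apply: le_trans le_wv le_vu.
  - by move=> p q _ /[!inE] lt_qn l /andP[_ lt_lq]; rewrite inE (ltn_trans lt_lq lt_qn).
  - by move=> p _ /[!inE] /step.
have sv : nonincr_row (row_of_levels t).
  by move=> i j le_ij; rewrite !mxE lerD2l ler_pM2l ?subr_gt0 //; apply: mono.
split; last split=> // i; rewrite ?mxE.
  apply/(majorizesE _ sv); split=> //.
  have in_tail F :
      List.In F [:: aff_prefix n; aff_opp (aff_prefix n)] -> List.In F admissible_cons.
    by move=> ?; do 2 (apply/List.in_app_iff; right).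
  have := cons _ (in_tail _ (or_intror (or_introl erefl))).
  have := cons _ (in_tail _ (or_introl erefl)).
  rewrite aff_eval_opp aff_eval_prefix.
  by rewrite oppr_ge0 subr_le0 subr_ge0 => le1 le2; apply/eqP; rewrite eq_le le1 le2.
have /andP[t0 t1] := box i (ltn_ord i); have ba : 0 < b - a by rewrite subr_gt0.
by apply/andP; split; nra.
Qed.
End AdmissibleLP.

Section MinimumValue.
Variables (R : realFieldType) (n : nat) (a b : R) (phi : 'rV[R]_n -> R).
Hypothesis lt_ab : a < b.
Implicit Types (x v : 'rV[R]_n).

Lemma admissible_dsort_row x : in_box a b x -> admissible a b x (dsort_row x).
Proof.
move=> bx; split; first exact: majorizes_dsort_row.
split; last exact: nonincr_dsort_row.
by have [s <-] := exists_perm_dsort_row x; apply: in_box_col_perm.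
Qed.

Lemma exists_ffun_f_argmin x : in_box a b x ->
  exists2 u, admissible a b x u &
    forall v, admissible a b x v -> ffun_f a b phi u <= ffun_f a b phi v.
Proof.
move=> bx; have feas := admissible_lp_feasible lt_ab (admissible_dsort_row bx).
have [t Ft min_t] := lp_min_attained (ffun_f_aff a b phi) (ex_intro _ _ feas).
exists (row_of_levels n a b t); first exact: lp_feasible_admissible.
move=> v adm_v; rewrite -(row_of_levels_level lt_ab v) -!(aff_eval_ffun_f lt_ab).
by apply: min_t; apply: admissible_lp_feasible.
Qed.

Lemma exists_ffun_f_argmin_fun : exists U : 'rV[R]_n -> 'rV[R]_n, forall x, in_box a b x ->
  admissible a b x (U x) /\
  forall v, admissible a b x v -> ffun_f a b phi (U x) <= ffun_f a b phi v.
Proof.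
have argmin x : exists u, in_box a b x -> admissible a b x u /\
    forall v, admissible a b x v -> ffun_f a b phi u <= ffun_f a b phi v.
  have [/exists_ffun_f_argmin[u adm_u min_u]|nbx] := Classical_Prop.classic (in_box a b x).
    by exists u.
  by exists x => /nbx.
exists (fun x => proj1_sig (ClassicalEpsilon.constructive_indefinite_description _ (argmin x))).
by move=> x; case: (ClassicalEpsilon.constructive_indefinite_description _ (argmin x)).
Qed.

Section Selector.
Variable U : 'rV[R]_n -> 'rV[R]_n.
Hypothesis U_min : forall x, in_box a b x -> admissible a b x (U x) /\
  forall v, admissible a b x v -> ffun_f a b phi (U x) <= ffun_f a b phi v.

Lemma min_ffun_f_convex : convex_on (in_box a b) (fun x => ffun_f a b phi (U x)).
Proof.
move=> x y t bx by_ t01; have [adm_x _] := U_min bx; have [adm_y _] := U_min by_.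
have [_ minU] := U_min (in_box_comb t01 bx by_).
by rewrite -ffun_f_comb; apply/minU/admissible_comb.
Qed.

Lemma min_ffun_f_le_vertices : perm_invariant_on (in_box a b) phi ->
  forall v, in_vertices a b v -> ffun_f a b phi (U v) <= phi v.
Proof.
move=> phi_perm v vv; have bv := in_box_vertices (ltW lt_ab) vv.
have [_ minU] := U_min bv; apply: le_trans (minU _ (admissible_dsort_row bv)) _.
have [s es] := exists_perm_dsort_row v; rewrite -(phi_perm s v bv) es.
have vs : in_vertices a b (dsort_row v) by rewrite -es; apply: in_vertices_col_perm.
have [k le_kn ->] := nonincr_vertex_pcol lt_ab vs (nonincr_dsort_row v).
by rewrite ffun_f_pcol.
Qed.
End Selector.
End MinimumValue.

Unset Implicit Arguments.

Theorem mainTheorem16 (R : realFieldType) (n : nat) (a b : R)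
  (phi : 'rV[R]_n -> R) (g : 'rV[R]_n -> R) :
  a < b ->
  perm_invariant_on (in_box a b) phi ->
  is_conv_env (in_box a b) (in_box a b) phi g ->
  is_conv_env (in_box a b) (in_vertices a b) phi g ->
  forall x, in_box a b x ->
    (exists u, [/\ majorizes u x, sorted_in a b u & ffun_f a b phi u = g x]) /\
    (forall u, majorizes u x -> sorted_in a b u -> g x <= ffun_f a b phi u).
Proof.
move=> lt_ab phi_perm _ genv x bx.
have lower u : admissible a b x u -> g x <= ffun_f a b phi u.
  exact (conv_env_le_ffun_f lt_ab phi_perm genv bx).
split=> [|u mu su]; last exact: lower.
have [U U_min] := exists_ffun_f_argmin_fun phi lt_ab.
have [_ _ g_max] := genv.
have upper := g_max _ (min_ffun_f_convex U_min)
  (min_ffun_f_le_vertices lt_ab U_min phi_perm) x bx.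
have [[mu su] _] := U_min x bx.
by exists (U x); split=> //; apply/eqP; rewrite eq_le upper lower.
Qed.
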